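(* Let $n,s,t$ be nonnegative integers with $n\ge 2$, and let $U=\{1,\dots,n\}$. Let $R$ be a relation between subsets of $U$ and bit strings of length $n+s$ (the representations of a systematic data structure) such that every $S\subseteq U$ has at least one representation $B$ with $(S,B)\in R$, and whenever $(S,B)\in R$ with $B=(B_1,\dots,B_{n+s})$, we have $B_\ell=1\iff\ell\in S$ for $\ell=1,\dots,n$. Assume that for each $r\in\{1,\dots,n\}$ there is an adaptive bit-probe algorithm (a deterministic decision tree that queries individual bits of its input) which, for every $S\subseteq U$ with $|S|=r$ and every $B$ with $(S,B)\in R$, probes at most $rt$ bits of $B$ and outputs $S$ (i.e., distinguishes among the $\binom{n}{r}$ subsets of size $r$). Then $$\Big(s+\frac{1}{\ln 2}\Big)t\ \ge\ \frac{n}{e\ln 2},$$ and, if $s>0$, $st\ge n/2$. *)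

From Stdlib Require Import Reals List Arith.
Import ListNotations.

(* Subsets of U = {1,...,n} are characteristic vectors: lists of booleans of
   length n, entry at index l-1 (0-based) telling whether l is in S.
   Bit strings B_1..B_{n+s} are lists of booleans of length n+s, 0-indexed. *)

Definition card_bits (S : list bool) : nat := length (filter (fun b => b) S).

(* deterministic adaptive bit-probe algorithm = binary decision tree;
   Node i t0 t1 probes bit i (0-based) and continues with t0 if it is 0,
   with t1 if it is 1. *)
Inductive dtree (A : Type) : Type :=
| Leaf : A -> dtree A
| Node : nat -> dtree A -> dtree A -> dtree A.
Arguments Leaf {A} _.
Arguments Node {A} _ _ _.

Fixpoint dt_output {A : Type} (T : dtree A) (B : list bool) : A :=
  match T with
  | Leaf a => a
  | Node i t0 t1 => if nth i B false then dt_output t1 B else dt_output t0 B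
  end.

Fixpoint dt_probes {A : Type} (T : dtree A) (B : list bool) : nat :=
  match T with
  | Leaf _ => 0
  | Node i t0 t1 => S (if nth i B false then dt_probes t1 B else dt_probes t0 B)
  end.

(* Run the algorithm for sets of size r.  Every input it must handle has at
   most r ones among its characteristic bits, so on any path of the decision
   tree at most s probes read a fresh redundancy bit and at most r probes read
   a fresh characteristic bit equal to 1.  For r <= s this leaves at most
   2^s C(rt, r) reachable outcomes, while C(n, r) sets must be told apart;
   as C(n, r) / C(rt, r) >= (n / rt)^r, we get n^r <= 2^s (rt)^r.  The choice
   r = s gives n <= 2st, and r = ceil(s ln 2), for which 2^s < e^r, gives
   n <= e t (s ln 2 + 1); when s = 0 the case r = 1 already gives n <= t + 1. *)

From Stdlib Require Import Reals List Arith ZArith Lia Lra.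
Import ListNotations.
Local Open Scope bool_scope.

Fixpoint binom (n k : nat) : nat :=
  match n, k with
  | _, 0 => 1
  | 0, S _ => 0
  | S n', S k' => binom n' k' + binom n' (S k')
  end.

Lemma binom_n0 n : binom n 0 = 1.
Proof. destruct n; reflexivity. Qed.

Lemma binom_SS n k : binom (S n) (S k) = binom n k + binom n (S k).
Proof. reflexivity. Qed.

Lemma binom_n1 n : binom n 1 = n.
Proof. induction n as [|n IH]; [reflexivity|]. rewrite binom_SS, binom_n0, IH. lia. Qed.

Lemma binom_small n k : n < k -> binom n k = 0.
Proof.
  revert k; induction n as [|n IH]; intros [|k] Hk; simpl; try lia.
  rewrite !IH by lia. reflexivity.
Qed.

Lemma binom_pos n k : k <= n -> 1 <= binom n k.
Proof.
  revert k; induction n as [|n IH]; intros [|k] Hk; simpl; try lia.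
  specialize (IH k ltac:(lia)). lia.
Qed.

Lemma binom_mono_l m n k : m <= n -> binom m k <= binom n k.
Proof.
  induction 1 as [|n _ IH]; [lia|].
  destruct k as [|k]; [rewrite !binom_n0; lia|]. rewrite binom_SS. lia.
Qed.

Lemma binom_absorption n k : binom n (S k) * S k = binom n k * (n - k).
Proof.
  revert k; induction n as [|n IH]; intros k.
  - destruct k; simpl; lia.
  - destruct k as [|k].
    + rewrite binom_SS, !binom_n0, binom_n1. lia.
    + rewrite !binom_SS.
      destruct (le_lt_dec (S k) n).
      * pose proof (IH (S k)) as H1. pose proof (IH k) as H2.
        replace (S n - S k) with (n - k) by lia.
        replace (n - S k) with (n - k - 1) in H1 by lia.
        nia.
      * rewrite (binom_small n (S k)), (binom_small n (S (S k))) by lia.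
        replace (S n - S k) with 0 by lia. lia.
Qed.

Lemma binom_ratio_ge m n r : m <= n -> n ^ r * binom m r <= m ^ r * binom n r.
Proof.
  intros Hmn. induction r as [|r IH]; [simpl; rewrite !binom_n0; lia|].
  destruct (le_lt_dec r m) as [Hrm|Hmr].
  - apply (Nat.mul_le_mono_pos_r _ _ (S r)); [lia|].
    rewrite <- !Nat.mul_assoc, !binom_absorption. simpl Nat.pow.
    replace (n * n ^ r * (binom m r * (m - r)))
      with ((n ^ r * binom m r) * (n * (m - r))) by ring.
    replace (m * m ^ r * (binom n r * (n - r)))
      with ((m ^ r * binom n r) * (m * (n - r))) by ring.
    apply Nat.mul_le_mono; nia.
  - rewrite (binom_small m (S r)) by lia. lia.
Qed.

Fixpoint subsets_of_card (n k : nat) : list (list bool) :=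
  match n with
  | 0 => match k with 0 => [[]] | S _ => [] end
  | S n' => map (cons false) (subsets_of_card n' k) ++
            match k with 0 => [] | S k' => map (cons true) (subsets_of_card n' k') end
  end.

Lemma length_subsets_of_card n k : length (subsets_of_card n k) = binom n k.
Proof.
  revert k; induction n as [|n IH]; intros [|k]; simpl; auto.
  - rewrite app_nil_r, length_map, IH, binom_n0. reflexivity.
  - rewrite length_app, !length_map, !IH. lia.
Qed.

Lemma in_subsets_of_card n k S :
  In S (subsets_of_card n k) -> length S = n /\ card_bits S = k.
Proof.
  revert k S; induction n as [|n IH]; intros [|k] S HS; simpl in HS.
  - destruct HS as [<-|[]]. split; reflexivity.
  - destruct HS.
  - rewrite app_nil_r in HS. apply in_map_iff in HS as [S' [<- HS]].
    apply IH in HS. unfold card_bits in *; simpl; lia.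
  - apply in_app_or in HS as [HS|HS]; apply in_map_iff in HS as [S' [<- HS]];
      apply IH in HS; unfold card_bits in *; simpl; lia.
Qed.

Lemma NoDup_map_cons {A} (a : A) l : NoDup l -> NoDup (map (cons a) l).
Proof.
  intros Hl. apply NoDup_map_NoDup_ForallPairs; auto.
  intros x y _ _ E. now injection E.
Qed.

Lemma NoDup_subsets_of_card n k : NoDup (subsets_of_card n k).
Proof.
  revert k; induction n as [|n IH]; intros [|k]; simpl.
  - repeat constructor. intros [].
  - constructor.
  - rewrite app_nil_r. apply NoDup_map_cons, IH.
  - apply NoDup_app; try apply NoDup_map_cons, IH.
    intros S H0 H1. apply in_map_iff in H0 as [? [<- _]].
    apply in_map_iff in H1 as [? [E _]]. discriminate.
Qed.

(** * Counting the outcomes of a probe sequence *)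

(* Of [d] probes, at most [s] can read a fresh redundancy bit, giving the
   factor [2 ^ s]; the remaining at least [d - s] probes read characteristic
   bits, of which at most [k] answer 1, and
   [sum_(j <= k) C(d - s, j) <= C(d - s + k, k)]. *)
Definition outcome_bound (d k s : nat) : nat :=
  if d <=? s then 2 ^ d else 2 ^ s * binom (d - s + k) k.

Lemma pow2_pos m : 1 <= 2 ^ m.
Proof. induction m; simpl; lia. Qed.

Lemma outcome_bound_pos d k s : 1 <= outcome_bound d k s.
Proof.
  unfold outcome_bound. destruct (d <=? s); [apply pow2_pos|].
  pose proof (pow2_pos s). pose proof (binom_pos (d - s + k) k ltac:(lia)). nia.
Qed.

Lemma outcome_bound_succ d k s : outcome_bound d k s <= outcome_bound (S d) k s.
Proof.
  unfold outcome_bound.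
  destruct (Nat.leb_spec d s), (Nat.leb_spec (S d) s); try lia.
  - simpl; lia.
  - replace d with s by lia. pose proof (binom_pos (S s - s + k) k ltac:(lia)). nia.
  - apply Nat.mul_le_mono_l, binom_mono_l. lia.
Qed.

Lemma outcome_bound_prefix_step d k s :
  outcome_bound d (S k) s + outcome_bound d k s <= outcome_bound (S d) (S k) s.
Proof.
  unfold outcome_bound.
  destruct (Nat.leb_spec d s), (Nat.leb_spec (S d) s); try lia.
  - simpl; lia.
  - replace d with s by lia. replace (S s - s + S k) with (S (S k)) by lia.
    rewrite binom_SS. pose proof (binom_pos (S k) k ltac:(lia)).
    pose proof (binom_pos (S k) (S k) ltac:(lia)). nia.
  - replace (S d - s + S k) with (S (d - s + S k)) by lia. rewrite binom_SS.
    pose proof (binom_mono_l (d - s + k) (d - s + S k) k ltac:(lia)). nia.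
Qed.

Lemma outcome_bound_suffix_step d k s :
  2 * outcome_bound d k s <= outcome_bound (S d) k (S s).
Proof.
  unfold outcome_bound. simpl (S d <=? S s).
  destruct (d <=? s); [simpl; lia|].
  replace (S d - S s) with (d - s) by lia. simpl. lia.
Qed.

Lemma outcome_bound_le d k s :
  k <= s -> k <= d -> outcome_bound d k s <= 2 ^ s * binom d k.
Proof.
  intros Hks Hkd. unfold outcome_bound. destruct (Nat.leb_spec d s).
  - pose proof (binom_pos d k Hkd). pose proof (Nat.pow_le_mono_r 2 d s ltac:(lia) H). nia.
  - apply Nat.mul_le_mono_l, binom_mono_l. lia.
Qed.

(** * Decision trees on systematic inputs *)

Definition free_count (f fixed : nat -> bool) (l : list nat) : nat :=
  length (filter (fun q => f q && negb (fixed q)) l).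

Definition fix_bit (p : nat) (fixed : nat -> bool) (q : nat) : bool := (q =? p) || fixed q.

Lemma free_count_fix_bit_le f fixed p l :
  free_count f (fix_bit p fixed) l <= free_count f fixed l.
Proof.
  unfold free_count, fix_bit. induction l as [|a l IH]; simpl; [lia|].
  destruct (f a), (a =? p), (fixed a); simpl; lia.
Qed.

Lemma free_count_fix_bit f fixed p l : NoDup l -> In p l -> f p = true -> fixed p = false ->
  free_count f fixed l = S (free_count f (fix_bit p fixed) l).
Proof.
  unfold free_count, fix_bit. induction l as [|a l IH]; intros Hnd Hin Hf Hp; [destruct Hin|].
  inversion_clear Hnd as [|? ? Ha Hnd']. simpl. destruct Hin as [<-|Hin].
  - rewrite Hf, Hp, Nat.eqb_refl. simpl. do 2 f_equal. apply filter_ext_in.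
    intros q Hq. destruct (Nat.eqb_spec q a); [subst; contradiction|reflexivity].
  - destruct (Nat.eqb_spec a p); [subst; contradiction|]. simpl.
    destruct (f a && negb (fixed a)); simpl; rewrite (IH Hnd' Hin Hf Hp); reflexivity.
Qed.

Lemma NoDup_map_filter {A B} (f : A -> B) (P : A -> bool) l :
  NoDup (map f l) -> NoDup (map f (filter P l)).
Proof.
  induction l as [|a l IH]; simpl; intros Hl; [constructor|].
  inversion_clear Hl as [|? ? Ha Hl']. destruct (P a); simpl; auto.
  constructor; auto. intros Hin. apply Ha.
  apply in_map_iff in Hin as [x [E Hx]]. apply filter_In in Hx.
  apply in_map_iff. exists x. tauto.
Qed.

Section DecisionTrees.

(* Inputs are bit strings of length [n + s]: [n] characteristic bits followed
   by [s] redundancy bits.  A predicate [fixed] marks the positions already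
   probed on the current path. *)
Variables n s : nat.

Definition free_ones (fixed : nat -> bool) (B : list bool) : nat :=
  free_count (fun q => nth q B false) fixed (seq 0 n).

Definition free_redundancy (fixed : nat -> bool) : nat :=
  free_count (fun _ => true) fixed (seq n s).

Definition agree_on (fixed : nat -> bool) (L : list (list bool)) : Prop :=
  forall B B' q, In B L -> In B' L -> fixed q = true -> nth q B false = nth q B' false.

Record admissible (T : dtree (list bool)) (d k s' : nat) (fixed : nat -> bool)
    (L : list (list bool)) : Prop := {
  adm_outputs : NoDup (map (dt_output T) L);
  adm_agree : agree_on fixed L;
  adm_redundancy : free_redundancy fixed <= s';
  adm_length : forall B, In B L -> length B = n + s;
  adm_probes : forall B, In B L -> dt_probes T B <= d;
  adm_ones : forall B, In B L -> free_ones fixed B <= k }.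

Definition branch (p : nat) (b : bool) (L : list (list bool)) : list (list bool) :=
  filter (fun B => Bool.eqb (nth p B false) b) L.

Lemma in_branch p b L B : In B (branch p b L) <-> In B L /\ nth p B false = b.
Proof. unfold branch. rewrite filter_In, Bool.eqb_true_iff. reflexivity. Qed.

Lemma length_branches p L : length L = length (branch p false L) + length (branch p true L).
Proof.
  unfold branch. induction L as [|B L IH]; simpl; [reflexivity|].
  destruct (nth p B false); simpl; lia.
Qed.

Lemma branch_nil_of_const p L :
  (forall B B', In B L -> In B' L -> nth p B false = nth p B' false) ->
  branch p false L = [] \/ branch p true L = [].
Proof.
  intros Hconst. destruct (branch p false L) as [|B L0] eqn:E0; [now left|right].
  destruct (branch p true L) as [|B' L1] eqn:E1; [reflexivity|exfalso].
  assert (HB : In B (branch p false L)) by (rewrite E0; now left).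
  assert (HB' : In B' (branch p true L)) by (rewrite E1; now left).
  apply in_branch in HB as [HB HBp], HB' as [HB' HB'p].
  rewrite (Hconst B B' HB HB'), HB'p in HBp. discriminate.
Qed.

Lemma free_ones_fix_bit fixed p B : p < n -> fixed p = false -> nth p B false = true ->
  free_ones fixed B = S (free_ones (fix_bit p fixed) B).
Proof.
  intros. apply free_count_fix_bit; auto. apply seq_NoDup. apply in_seq. lia.
Qed.

Lemma free_redundancy_fix_bit fixed p : n <= p < n + s -> fixed p = false ->
  free_redundancy fixed = S (free_redundancy (fix_bit p fixed)).
Proof.
  intros. apply free_count_fix_bit; auto. apply seq_NoDup. apply in_seq. lia.
Qed.

Lemma admissible_branch p T0 T1 d k s' fixed L (b : bool) :
  admissible (Node p T0 T1) (S d) k s' fixed L ->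
  admissible (if b then T1 else T0) d k s' fixed (branch p b L).
Proof.
  intros [Hout Hagr Hred Hlen Hprb Hone].
  assert (Hsub : forall B, In B (branch p b L) -> In B L) by (intros B HB; apply in_branch in HB; tauto).
  split; auto.
  - rewrite (map_ext_in _ (dt_output (Node p T0 T1))).
    + now apply NoDup_map_filter.
    + intros B HB. apply in_branch in HB as [_ HBp]. simpl. rewrite HBp. now destruct b.
  - intros B B' q HB HB'. apply Hagr; auto.
  - intros B HB. pose proof (Hprb B (Hsub B HB)) as HpB.
    apply in_branch in HB as [_ HBp]. simpl in HpB. rewrite HBp in HpB. destruct b; lia.
Qed.

Lemma admissible_fix_bit T d k s' fixed L p :
  admissible T d k s' fixed L ->
  (forall B B', In B L -> In B' L -> nth p B false = nth p B' false) ->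
  admissible T d k s' (fix_bit p fixed) L.
Proof.
  intros [Hout Hagr Hred Hlen Hprb Hone] Hp. split; auto.
  - intros B B' q HB HB' Hq. unfold fix_bit in Hq.
    destruct (Nat.eqb_spec q p) as [->|]; auto.
  - pose proof (free_count_fix_bit_le (fun _ => true) fixed p (seq n s)).
    unfold free_redundancy in *. lia.
  - intros B HB. pose proof (Hone B HB).
    pose proof (free_count_fix_bit_le (fun q => nth q B false) fixed p (seq 0 n)).
    unfold free_ones in *. lia.
Qed.

Lemma admissible_fix_one T d k s' fixed L p : p < n -> fixed p = false ->
  (forall B, In B L -> nth p B false = true) ->
  admissible T d (S k) s' fixed L -> admissible T d k s' (fix_bit p fixed) L.
Proof.
  intros Hpn Hfix Hone1 HL.
  assert (HL' : admissible T d (S k) s' (fix_bit p fixed) L).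
  { apply admissible_fix_bit; auto. intros B B' HB HB'. now rewrite !Hone1. }
  destruct HL' as [Hout Hagr Hred Hlen Hprb _]. split; auto.
  intros B HB. pose proof (adm_ones _ _ _ _ _ _ HL B HB).
  rewrite (free_ones_fix_bit fixed p B) in *; auto. lia.
Qed.

Lemma admissible_fix_redundant T d k s' fixed L p : n <= p < n + s -> fixed p = false ->
  (forall B B', In B L -> In B' L -> nth p B false = nth p B' false) ->
  admissible T d k (S s') fixed L -> admissible T d k s' (fix_bit p fixed) L.
Proof.
  intros Hp Hfix Hconst HL.
  destruct (admissible_fix_bit T d k (S s') fixed L p HL Hconst) as [Hout Hagr _ Hlen Hprb Hone].
  split; auto. pose proof (adm_redundancy _ _ _ _ _ _ HL).
  rewrite (free_redundancy_fix_bit fixed p) in *; auto. lia.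
Qed.

Definition bounded_at (T : dtree (list bool)) (d : nat) : Prop :=
  forall k s' fixed L, admissible T d k s' fixed L -> length L <= outcome_bound d k s'.

Section NodeStep.

Variables (p d k s' : nat) (T0 T1 : dtree (list bool)) (fixed : nat -> bool).
Variable L : list (list bool).
Hypothesis IH : forall b : bool, bounded_at (if b then T1 else T0) d.
Hypothesis HL : admissible (Node p T0 T1) (S d) k s' fixed L.

Let Hbr (b : bool) := admissible_branch p T0 T1 d k s' fixed L b HL.

Lemma branch_agree_at (b : bool) B B' : In B (branch p b L) -> In B' (branch p b L) ->
  nth p B false = nth p B' false.
Proof. intros HB HB'. apply in_branch in HB, HB'. now rewrite (proj2 HB), (proj2 HB'). Qed.

Lemma node_length_le_const :
  (forall B B', In B L -> In B' L -> nth p B false = nth p B' false) ->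
  length L <= outcome_bound (S d) k s'.
Proof.
  intros Hconst. rewrite (length_branches p L).
  pose proof (IH false _ _ _ _ (Hbr false)). pose proof (IH true _ _ _ _ (Hbr true)).
  pose proof (outcome_bound_succ d k s').
  destruct (branch_nil_of_const p L Hconst) as [E|E]; rewrite E; simpl; lia.
Qed.

Lemma node_length_le_fresh_one : p < n -> fixed p = false ->
  length L <= outcome_bound (S d) k s'.
Proof.
  intros Hpn Hfix. rewrite (length_branches p L).
  pose proof (IH false _ _ _ _
    (admissible_fix_bit _ _ _ _ _ _ p (Hbr false) (branch_agree_at false))) as H0.
  destruct k as [|k'].
  - destruct (branch p true L) as [|B L1] eqn:E1.
    + pose proof (outcome_bound_succ d 0 s'). simpl; lia.
    + exfalso. assert (HB : In B (branch p true L)) by (rewrite E1; now left).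
      pose proof (adm_ones _ _ _ _ _ _ (Hbr true) B HB).
      apply in_branch in HB as [_ HBp].
      rewrite (free_ones_fix_bit fixed p B) in *; auto. lia.
  - assert (H1 : admissible T1 d k' s' (fix_bit p fixed) (branch p true L)).
    { apply admissible_fix_one; auto; [|exact (Hbr true)].
      intros B HB. now apply in_branch in HB. }
    pose proof (IH true _ _ _ _ H1). pose proof (outcome_bound_prefix_step d k' s').
    pose proof (outcome_bound_succ d (S k') s'). lia.
Qed.

Lemma node_length_le_fresh_redundant : n <= p < n + s -> fixed p = false ->
  length L <= outcome_bound (S d) k s'.
Proof.
  intros Hp Hfix. rewrite (length_branches p L).
  destruct s' as [|s''].
  - exfalso. pose proof (adm_redundancy _ _ _ _ _ _ HL).
    rewrite (free_redundancy_fix_bit fixed p) in *; auto. lia.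
  - assert (Hb : forall b : bool, length (branch p b L) <= outcome_bound d k s'').
    { intros b. apply (IH b k s'' (fix_bit p fixed)).
      apply admissible_fix_redundant; [lia|assumption|apply branch_agree_at|exact (Hbr b)]. }
    pose proof (Hb false). pose proof (Hb true).
    pose proof (outcome_bound_suffix_step d k s''). lia.
Qed.

End NodeStep.

Lemma bounded_at_node p T0 T1 d :
  bounded_at T0 d -> bounded_at T1 d -> bounded_at (Node p T0 T1) (S d).
Proof.
  intros IH0 IH1 k s' fixed L HL.
  assert (IH : forall b : bool, bounded_at (if b then T1 else T0) d) by (intros [|]; assumption).
  destruct (fixed p || (n + s <=? p)) eqn:Hp.
  - (* positions past the input read as [false] everywhere *)
    apply (node_length_le_const p d k s' T0 T1 fixed L IH HL).
    intros B B' HB HB'. apply Bool.orb_true_iff in Hp as [Hp|Hp].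
    + apply (adm_agree _ _ _ _ _ _ HL); auto.
    + apply Nat.leb_le in Hp.
      rewrite !nth_overflow by (rewrite (adm_length _ _ _ _ _ _ HL); auto; lia).
      reflexivity.
  - apply Bool.orb_false_iff in Hp as [Hfix Hp]. apply Nat.leb_gt in Hp.
    destruct (Nat.lt_ge_cases p n).
    + now apply (node_length_le_fresh_one p d k s' T0 T1 fixed L IH HL).
    + apply (node_length_le_fresh_redundant p d k s' T0 T1 fixed L IH HL); auto.
Qed.

Lemma bounded_at_all T d : bounded_at T d.
Proof.
  revert d. induction T as [o|p T0 IH0 T1 IH1]; intros d k s' fixed L HL.
  - pose proof (outcome_bound_pos d k s').
    destruct L as [|B1 [|B2 L]]; simpl; try lia. exfalso.
    pose proof (adm_outputs _ _ _ _ _ _ HL) as Hnd. simpl in Hnd.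
    inversion_clear Hnd as [|? ? Hnot _]. apply Hnot. now left.
  - destruct d as [|d].
    + destruct L as [|B L]; [simpl; lia|]. exfalso.
      pose proof (adm_probes _ _ _ _ _ _ HL B (or_introl eq_refl)). simpl in *. lia.
    + exact (bounded_at_node p T0 T1 d (IH0 d) (IH1 d) k s' fixed L HL).
Qed.

End DecisionTrees.

(** * From probe algorithms to a binomial inequality *)

Lemma card_bits_seq S : card_bits S = length (filter (fun q => nth q S false) (seq 0 (length S))).
Proof.
  induction S as [|b S IH] using rev_ind; [reflexivity|].
  unfold card_bits in *. rewrite length_app, seq_app, !filter_app, !length_app, IH. simpl.
  rewrite nth_middle. f_equal.
  - f_equal. apply filter_ext_in. intros q Hq. apply in_seq in Hq. symmetry. apply app_nth1. lia.
  - destruct b; reflexivity.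
Qed.

Section ProbeAlgorithms.

Variables n s t : nat.
Variable R : list bool -> list bool -> Prop.
Hypothesis HRtyp : forall S B, R S B -> length S = n /\ length B = n + s.
Hypothesis HRtot : forall S, length S = n -> exists B, R S B.
Hypothesis HRsys : forall S B, R S B -> forall l, l < n -> nth l B false = nth l S false.
Hypothesis Halg : forall r, 1 <= r <= n ->
  exists T : dtree (list bool),
    forall S B, R S B -> card_bits S = r -> dt_probes T B <= r * t /\ dt_output T B = S.

Lemma free_ones_representation S B : R S B -> free_ones n (fun _ => false) B = card_bits S.
Proof.
  intros HR. unfold free_ones, free_count.
  rewrite card_bits_seq, (proj1 (HRtyp S B HR)). f_equal. apply filter_ext_in.
  intros q Hq. apply in_seq in Hq. simpl. rewrite Bool.andb_true_r. apply (HRsys S B HR). lia.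
Qed.

Lemma representations_exist r (T : dtree (list bool)) :
  (forall S B, R S B -> card_bits S = r -> dt_output T B = S) ->
  forall l, (forall S, In S l -> length S = n /\ card_bits S = r) ->
  exists L, map (dt_output T) L = l /\ forall B, In B L -> exists S, R S B /\ card_bits S = r.
Proof.
  intros HT l. induction l as [|S l IH]; intros Hl.
  - exists []. split; [reflexivity|intros _ []].
  - destruct IH as [L [HLmap HL]]; [intros S' HS'; apply Hl; now right|].
    destruct (Hl S (or_introl eq_refl)) as [HSlen HScard].
    destruct (HRtot S HSlen) as [B HB].
    exists (B :: L). split.
    + simpl. now rewrite (HT S B), HLmap.
    + intros B' [<-|HB']; eauto.
Qed.

Lemma binom_le_outcome_bound r : 1 <= r <= n -> binom n r <= outcome_bound (r * t) r s.
Proof.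
  intros Hr. destruct (Halg r Hr) as [T HT].
  destruct (representations_exist r T (fun S B HR Hc => proj2 (HT S B HR Hc))
              (subsets_of_card n r) (in_subsets_of_card n r)) as [L [HLmap HL]].
  rewrite <- length_subsets_of_card, <- HLmap, length_map.
  apply (bounded_at_all n s T _ _ _ (fun _ => false)). split.
  - rewrite HLmap. apply NoDup_subsets_of_card.
  - intros B B' q _ _ Hq. discriminate.
  - unfold free_redundancy, free_count.
    rewrite filter_length_le, length_seq. reflexivity.
  - intros B HB. destruct (HL B HB) as [S [HR _]]. apply (HRtyp S B HR).
  - intros B HB. destruct (HL B HB) as [S [HR Hc]]. apply (HT S B HR Hc).
  - intros B HB. destruct (HL B HB) as [S [HR Hc]]. rewrite (free_ones_representation S B HR). lia.
Qed.

End ProbeAlgorithms.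

(** * Numerical consequences *)

Section RealFacts.

Local Open Scope R_scope.

Lemma ln2_bounds : 0 < ln 2 < 1.
Proof.
  pose proof ln_lt_2. pose proof (exp_ineq1 1 ltac:(lra)).
  split; [lra|]. rewrite <- (ln_exp 1). apply ln_increasing; lra.
Qed.

Lemma pow_le_reg_l x y r : 0 < y -> (0 < r)%nat -> x ^ r <= y ^ r -> x <= y.
Proof.
  intros Hy Hr Hxy. destruct (Rle_or_lt x y) as [|Hyx]; [assumption|exfalso].
  assert (Hlt : Rpower y (INR r) < Rpower x (INR r)).
  { apply Rlt_Rpower_l; [apply lt_0_INR; lia|lra]. }
  rewrite !Rpower_pow in Hlt by lra. lra.
Qed.

Lemma pow2_lt_exp_pow s r : INR s * ln 2 < INR r -> 2 ^ s < exp 1 ^ r.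
Proof.
  intros H. rewrite <- !Rpower_pow by (pose proof (exp_pos 1); lra).
  unfold Rpower. rewrite ln_exp, Rmult_1_r. now apply exp_increasing.
Qed.

Lemma exists_nat_between x : 0 <= x -> exists r : nat, x < INR r <= x + 1.
Proof.
  intros Hx. destruct (archimed x) as [Hup1 Hup2].
  assert (0 < up x)%Z by (apply lt_IZR; lra).
  exists (Z.to_nat (up x)). rewrite INR_IZR_INZ, Z2Nat.id by lia. lra.
Qed.

End RealFacts.

Section Consequences.

Variables n s t : nat.
Hypothesis Hn : 2 <= n.
Hypothesis Hbinom : forall r, 1 <= r <= n -> binom n r <= outcome_bound (r * t) r s.

Lemma probes_pos : 1 <= t.
Proof.
  specialize (Hbinom 1 ltac:(lia)). rewrite binom_n1, Nat.mul_1_l in Hbinom.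
  destruct t; [|lia]. unfold outcome_bound in Hbinom. simpl in Hbinom. lia.
Qed.

Lemma n_le_probes_succ : s = 0 -> n <= t + 1.
Proof.
  intros Hs0. pose proof probes_pos. subst s. specialize (Hbinom 1 ltac:(lia)).
  rewrite binom_n1, Nat.mul_1_l in Hbinom. unfold outcome_bound in Hbinom.
  destruct (Nat.leb_spec t 0); [lia|]. rewrite Nat.sub_0_r, binom_n1 in Hbinom. simpl in Hbinom. lia.
Qed.

Lemma pow_le_redundancy r : 1 <= r <= s -> r <= n -> n ^ r <= 2 ^ s * (r * t) ^ r.
Proof.
  intros Hr Hrn. pose proof probes_pos.
  destruct (le_lt_dec (r * t) n) as [Hm|Hm].
  - pose proof (binom_ratio_ge (r * t) n r Hm).
    pose proof (outcome_bound_le (r * t) r s ltac:(lia) ltac:(nia)).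
    pose proof (Hbinom r ltac:(lia)).
    pose proof (binom_pos (r * t) r ltac:(nia)).
    apply (Nat.mul_le_mono_pos_r _ _ (binom (r * t) r)); [lia|].
    rewrite <- Nat.mul_assoc, (Nat.mul_comm (_ ^ r)), Nat.mul_assoc. nia.
  - pose proof (pow2_pos s). pose proof (Nat.pow_le_mono_l n (r * t) r ltac:(lia)). nia.
Qed.

Lemma redundancy_bound : 0 < s -> n <= 2 * s * t.
Proof.
  intros Hs. pose proof probes_pos.
  destruct (le_lt_dec s n) as [Hsn|Hsn]; [|nia].
  apply (Nat.pow_le_mono_l_iff _ _ s); [lia|].
  rewrite <- Nat.mul_assoc, Nat.pow_mul_l. apply pow_le_redundancy; lia.
Qed.

Local Open Scope R_scope.

Lemma entropy_bound : INR n <= exp 1 * INR t * (INR s * ln 2 + 1).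
Proof.
  pose proof ln2_bounds. pose proof (exp_ineq1_le 1) as He.
  pose proof probes_pos as Ht. apply le_INR in Ht. simpl in Ht.
  destruct (Nat.eq_dec s 0) as [Hs0|Hs].
  - pose proof (le_INR _ _ (n_le_probes_succ Hs0)) as Hnt. rewrite plus_INR in Hnt.
    rewrite Hs0. simpl in *. nra.
  - assert (HsR : 1 <= INR s) by (apply (le_INR 1); lia).
    destruct (exists_nat_between (INR s * ln 2)) as [r [Hr1 Hr2]]; [nra|].
    assert (Hr : (0 < r)%nat) by (apply INR_lt; simpl; nra).
    assert (Hrs : (r <= s)%nat) by (apply Nat.lt_succ_r, INR_lt; rewrite S_INR; nra).
    assert (Hrt : exp 1 * INR (r * t) <= exp 1 * INR t * (INR s * ln 2 + 1)).
    { rewrite mult_INR, <- Rmult_assoc, (Rmult_assoc (exp 1)), (Rmult_comm (INR r)), <- Rmult_assoc.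
      apply Rmult_le_compat_l; [pose proof (exp_pos 1); nra|lra]. }
    destruct (le_lt_dec r n) as [Hrn|Hnr].
    + pose proof (le_INR _ _ (pow_le_redundancy r ltac:(lia) Hrn)) as Hpow.
      rewrite mult_INR, !pow_INR in Hpow. replace (INR 2) with 2 in Hpow by (simpl; lra).
      pose proof (pow2_lt_exp_pow s r Hr1) as H2e.
      assert (Hmt : 0 < INR (r * t)) by (apply lt_0_INR; pose proof probes_pos; nia).
      assert (INR n <= exp 1 * INR (r * t)); [|lra].
      apply (pow_le_reg_l _ _ r); [nra|lia|].
      rewrite Rpow_mult_distr. eapply Rle_trans; [exact Hpow|].
      apply Rmult_le_compat_r; [apply pow_le|]; lra.
    + apply lt_INR in Hnr.
      assert (1 <= exp 1 * INR t) by nra.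
      assert (0 <= (exp 1 * INR t - 1) * (INR s * ln 2 + 1)) by (apply Rmult_le_pos; nra).
      nra.
Qed.

End Consequences.

Open Scope R_scope.

Theorem mainTheorem8 (n s t : nat) (Hn : (2 <= n)%nat)
  (R : list bool -> list bool -> Prop)
  (HRtyp : forall S B, R S B -> length S = n /\ length B = (n + s)%nat)
  (HRtot : forall S, length S = n -> exists B, R S B)
  (HRsys : forall S B, R S B ->
     forall l, (l < n)%nat -> nth l B false = nth l S false)
  (Halg : forall r, (1 <= r <= n)%nat ->
     exists T : dtree (list bool),
       forall S B, R S B -> card_bits S = r ->
         (dt_probes T B <= r * t)%nat /\ dt_output T B = S) :
  (INR s + 1 / ln 2) * INR t >= INR n / (exp 1 * ln 2) /\
  ((0 < s)%nat -> INR s * INR t >= INR n / 2).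
Proof.
  pose proof (binom_le_outcome_bound n s t R HRtyp HRtot HRsys Halg) as Hbinom.
  pose proof ln2_bounds. pose proof (exp_pos 1).
  split.
  - pose proof (entropy_bound n s t Hn Hbinom) as Hent. apply Rle_ge.
    replace ((INR s + 1 / ln 2) * INR t)
      with (exp 1 * INR t * (INR s * ln 2 + 1) / (exp 1 * ln 2)) by (field; lra).
    apply Rmult_le_compat_r; [|exact Hent].
    left. apply Rinv_0_lt_compat, Rmult_lt_0_compat; lra.
  - intros Hs. pose proof (le_INR _ _ (redundancy_bound n s t Hn Hbinom Hs)) as Hred.
    rewrite !mult_INR in Hred. simpl in Hred. lra.
Qed.
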